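(* Let $k\le n$ be positive integers and $A\in\mathbb{C}^{n\times n}$ with eigenvalues ordered so that $|\lambda_1(A)|\ge\cdots\ge|\lambda_n(A)|$. Then $$\left|\prod_{i=1}^k\lambda_i(A)\right|\le\left(\frac nk\right)^{k/2}\min\left\{\max_{|\alpha|=k}\prod_{i\in\alpha}\|\mathrm{col}_i(A)\|_2,\ \max_{|\alpha|=k}\prod_{i\in\alpha}\|\mathrm{row}_i(A)\|_2\right\},$$ where the maxima are over subsets $\alpha\subseteq\{1,\ldots,n\}$ with $|\alpha|=k$.
   Context: $\mathrm{col}_i(A)$ is the $i$th column and $\mathrm{row}_i(A)$ the (transposed) $i$th row of $A$; $\|\cdot\|_2$ is the Euclidean norm. *)

From mathcomp Require Import all_boot all_order all_algebra.
Set Implicit Arguments. Unset Strict Implicit. Unset Printing Implicit Defensive.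
Import Order.TTheory GRing.Theory Num.Theory.
Local Open Scope ring_scope.

(* C is any numeric algebraically closed field (e.g. the complex numbers);
   `|x| is the modulus. *)

Definition eigenseq (C : numClosedFieldType) (n : nat) (A : 'M[C]_n) (s : seq C) :=
  char_poly A = \prod_(x <- s) ('X - x%:P).

Definition modulus_sorted (C : numClosedFieldType) (s : seq C) :=
  sorted (fun x y : C => `|y| <= `|x|) s.

Definition colnorm (C : numClosedFieldType) (n : nat) (A : 'M[C]_n) (j : 'I_n) : C :=
  sqrtC (\sum_(i < n) `|A i j| ^+ 2).
Definition rownorm (C : numClosedFieldType) (n : nat) (A : 'M[C]_n) (i : 'I_n) : C :=
  sqrtC (\sum_(j < n) `|A i j| ^+ 2).

(* max over subsets alpha of {0..n-1} with |alpha| = k of prod_{i in alpha} f i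
   (all values are nonnegative reals, so 0 is a valid neutral element). *)
Definition maxprod (C : numClosedFieldType) (n k : nat) (f : 'I_n -> C) : C :=
  \big[Order.max/0]_(alpha : {set 'I_n} | #|alpha| == k) \prod_(i in alpha) f i.

From mathcomp Require Import all_boot all_order all_algebra.
From mathcomp Require Import fingroup perm.
Set Implicit Arguments. Unset Strict Implicit. Unset Printing Implicit Defensive.
Import Order.TTheory GRing.Theory Num.Theory.
Local Open Scope ring_scope.
Local Open Scope sesquilinear_scope.

(* Triangularize A unitarily with the k chosen eigenvalues first on the
   diagonal.  The first k rows U of the unitary matrix satisfy U A = T U with T
   triangular, so det T is the product of those eigenvalues and T = U A U^*.
   Write A = D B with D the diagonal of row norms and rows of B of norm <= 1;
   then T = (U D) W with W = B U^*.  Cauchy-Binet expands k! det T over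
   selections f of k columns of U D and k rows of W; the diagonal contributes a
   product of k row norms, at most their maximum M, and Cauchy-Schwarz with
   sum_f |det U_f|^2 = k! and sum_f |det W_f|^2 = k! det (W^* W) yields
   |det T|^2 <= M^2 det (W^* W).  Finally det (W^* W) <= (tr (W^* W) / k)^k
   by AM-GM on its eigenvalues, and tr (W^* W) <= n by Bessel's inequality.
   The column bound is the row bound for A^T. *)

Section CauchyBinet.
Variable R : comNzRingType.

Lemma det_mulmx_sum_ffun k n (X : 'M[R]_(k, n)) (Y : 'M[R]_(n, k)) :
  \det (X *m Y) =
    \sum_(f : {ffun 'I_k -> 'I_n}) (\prod_i X i (f i)) * \det (rowsub f Y).
Proof.
transitivity (\sum_(s : 'S_k) (-1) ^+ s *
   \sum_(f : {ffun 'I_k -> 'I_n}) \prod_i (X i (f i) * Y (f i) (s i))).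
  by apply: eq_bigr => s _; under eq_bigr do rewrite mxE; rewrite bigA_distr_bigA.
under eq_bigr do rewrite big_distrr; rewrite exchange_big.
apply: eq_bigr => f _; rewrite big_distrr; apply: eq_bigr => s _ /=.
rewrite big_split /= mulrCA; congr (_ * (_ * _)).
by apply: eq_bigr => i _; rewrite mxE.
Qed.

Lemma cauchy_binet k n (X : 'M[R]_(k, n)) (Y : 'M[R]_(n, k)) :
  k`!%:R * \det (X *m Y) =
    \sum_(f : {ffun 'I_k -> 'I_n}) \det (colsub f X) * \det (rowsub f Y).
Proof.
rewrite mulr_natl -card_Sn -sumr_const.
transitivity (\sum_(s : 'S_k) \sum_(f : {ffun 'I_k -> 'I_n})
   (-1) ^+ s * (\prod_i X i (f (s i))) * \det (rowsub f Y)).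
  apply: eq_bigr => s _; rewrite det_mulmx_sum_ffun.
  rewrite (reindex (fun f : {ffun 'I_k -> 'I_n} => [ffun i => f (s i)])) /=;
    last first.
    exists (fun f : {ffun 'I_k -> 'I_n} => [ffun i => f ((s^-1)%g i)]) => f _;
      by apply/ffunP => i; rewrite !ffunE ?permKV ?permK.
  apply: eq_bigr => f _.
  have -> : rowsub [ffun i => f (s i)] Y = perm_mx s *m rowsub f Y.
    by rewrite -row_permE; apply/matrixP => i j; rewrite !mxE ffunE.
  rewrite det_mulmx det_perm mulrCA mulrA.
  by under eq_bigr do rewrite ffunE.
rewrite exchange_big; apply: eq_bigr => f _ /=; rewrite -big_distrl /=.
congr (_ * _); apply: eq_bigr => s _; congr (_ * _).
by apply: eq_bigr => i _; rewrite mxE.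
Qed.

End CauchyBinet.

Section CharPoly.
Variable R : comUnitRingType.

Lemma char_poly_conj n (S A : 'M[R]_n) : S \in unitmx ->
  char_poly (S *m A *m invmx S) = char_poly A.
Proof.
move=> Su; rewrite /char_poly /char_poly_mx.
have -> : 'X%:M - map_mx polyC (S *m A *m invmx S) =
    map_mx polyC S *m ('X%:M - map_mx polyC A) *m map_mx polyC (invmx S).
  rewrite !map_mxM mulmxBr mulmxBl mul_mx_scalar -scalemxAl.
  by rewrite -[in X in _ *: X]map_mxM mulmxV // map_mx1 scalemx1 ?mulmxA.
rewrite !det_mulmx !det_map_mx mulrAC -rmorphM -det_mulmx mulmxV //.
by rewrite det1 rmorph1 mul1r.
Qed.

Lemma char_poly_block_lower n1 n2 (Aul : 'M[R]_n1) (Adl : 'M[R]_(n2, n1)) Adr :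
  char_poly (block_mx Aul 0 Adl Adr) = char_poly Aul * char_poly Adr.
Proof.
rewrite /char_poly /char_poly_mx map_block_mx map_mx0 (scalar_mx_block n1 n2).
by rewrite opp_block_mx add_block_mx oppr0 addr0 det_lblock.
Qed.

Lemma char_poly_trmx n (A : 'M[R]_n) : char_poly A^T = char_poly A.
Proof.
rewrite /char_poly -det_tr; congr (\det _); apply/matrixP => i j.
by rewrite !mxE eq_sym.
Qed.

End CharPoly.

Lemma rowsub_trig_intertwine (R : pzRingType) k n (kn : (k <= n)%N)
    (P B G : 'M[R]_n) : is_trig_mx G -> P *m B = G *m P ->
  rowsub (widen_ord kn) P *m B =
    mxsub (widen_ord kn) (widen_ord kn) G *m rowsub (widen_ord kn) P.
Proof.
move=> /is_trig_mxP G_trig PB; rewrite mul_rowsub_mx PB -mul_rowsub_mx.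
apply/matrixP => i j; rewrite !mxE (bigID (fun l : 'I_n => (l < k)%N)) /=.
rewrite [X in _ + X]big1 ?addr0 => [|l]; last first.
  by rewrite -leqNgt => kl; rewrite mxE G_trig ?mul0r // (leq_trans (ltn_ord i)).
by rewrite (big_ord_narrow kn); apply: eq_bigr => l _; rewrite !mxE.
Qed.

Section Unitary.
Variable C : numClosedFieldType.

Local Notation "B ^!" :=
  (orthomx Num.conj (mx_of_hermitian (hermitian1mx _)) B) : matrix_set_scope.

Lemma unitarymx1 n : 1%:M \is @unitarymx C n n.
Proof. by apply/unitarymxP; rewrite trmx1 map_mx1 mulmx1. Qed.

Lemma unitarymx_block_diag m1 n1 m2 n2 (P1 : 'M[C]_(m1, n1)) (P2 : 'M[C]_(m2, n2)) :
  P1 \is unitarymx -> P2 \is unitarymx -> block_mx P1 0 0 P2 \is unitarymx.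
Proof.
move=> /unitarymxP P1u /unitarymxP P2u; apply/unitarymxP.
rewrite tr_block_mx map_block_mx mulmx_block !trmx0 !map_mx0.
by rewrite !(mulmx0, mul0mx, addr0, add0r) P1u P2u -scalar_mx_block.
Qed.

Lemma rowsub_unitarymx m k n (f : 'I_k -> 'I_m) (P : 'M[C]_(m, n)) :
  injective f -> P \is unitarymx -> rowsub f P \is unitarymx.
Proof.
move=> f_inj /unitarymxP Pu; apply/unitarymxP.
have -> : (rowsub f P)^t* = colsub f (P^t*) by apply/matrixP => i j; rewrite !mxE.
by rewrite -mxsub_mul Pu; apply/matrixP => i j; rewrite !mxE (inj_eq f_inj).
Qed.

Lemma char_poly_unitary_conj n (P A : 'M[C]_n) : P \is unitarymx ->
  char_poly (P *m A *m P^t*) = char_poly A.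
Proof. by move=> Pu; rewrite -invmx_unitary // char_poly_conj // unitarymx_unit. Qed.

Lemma unitary_deflation n (A : 'M[C]_n.+1) a : eigenvalue A a ->
  exists2 S : 'M[C]_(1 + n, n.+1), S \is unitarymx &
    exists c A', S *m A *m S^t* = block_mx a%:M 0 c A'.
Proof.
move=> /eigenvalueP [v vA v0].
have rv : \rank v = 1%N by rewrite rank_rV v0.
have rvo : \rank v^!%MS = n by rewrite rank_ortho rv subn1.
have SA : schmidt (row_base v) *m A = a *: schmidt (row_base v).
  apply/eigenspaceP; rewrite eqmx_schmidt_free ?row_base_free ?eq_row_base //.
  exact/eigenspaceP.
have top : schmidt (row_base v) *m A *m (schmidt (row_base v))^t* = a%:M.
  by rewrite SA -scalemxAl (unitarymxP _) ?scalemx1 ?schmidt_unitarymx ?rank_leq_col.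
have top_right : schmidt (row_base v) *m A *m (schmidt (row_base v^!%MS))^t* = 0.
  rewrite SA -scalemxAl (orthomx1P _) ?scaler0 //.
  by do 2!rewrite eqmx_schmidt_free ?row_base_free ?eq_row_base // orthomx_sym.
(* Generalize the two Schmidt bases to rewrite their row counts to 1 and n. *)
move: (schmidt_complete_unitarymx v) top top_right; rewrite /schmidt_complete.
move: (schmidt (row_base v)) (schmidt (row_base v^!%MS)); rewrite rv rvo.
move=> T1 T2 Su top top_right; exists (col_mx T1 T2) => //.
exists (T2 *m A *m T1^t*), (T2 *m A *m T2^t*).
by rewrite mul_col_mx tr_col_mx map_row_mx mul_col_row top top_right.
Qed.

Lemma unitary_trig_eigenseq n (A : 'M[C]_n) (s : seq C) : eigenseq A s ->
  exists2 P : 'M[C]_n, P \is unitarymx &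
    is_trig_mx (P *m A *m P^t*) /\ forall i, (P *m A *m P^t*) i i = s`_i.
Proof.
elim: n A s => [|n IHn] A s eigAs.
  exists 1%:M; first exact: unitarymx1.
  by split; [apply/is_trig_mxP => -[] | case].
have := size_char_poly A; rewrite eigAs size_prod_XsubC.
case: s eigAs => [//|a s] eigAs _.
have /unitary_deflation [S Su [c [A' SAS]]] : eigenvalue A a.
  by rewrite eigenvalue_root_char eigAs big_cons rootM root_XsubC eqxx.
have eigA's : eigenseq A' s.
  have : char_poly (block_mx (a%:M : 'M_1) 0 c A') = char_poly A.
    (* [exact] identifies the dimension 1 + n with n.+1 up to conversion. *)
    by rewrite -SAS; exact: char_poly_unitary_conj.
  rewrite char_poly_block_lower eigAs big_cons char_poly_trig ?mx11_is_trig //.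
  rewrite big_ord1 mxE eqxx mulr1n.
  by move/mulfI; apply; rewrite polyXsubC_eq0.
have [P' P'u [P't P'd]] := IHn A' s eigA's.
pose Q := block_mx (1%:M : 'M_1) 0 0 P'.
have QSAS : Q *m (S *m A *m S^t*) *m Q^t* =
    block_mx a%:M 0 (P' *m c) (P' *m A' *m P'^t*).
  rewrite SAS tr_block_mx map_block_mx !mulmx_block !trmx0 !map_mx0.
  rewrite !tr_scalar_mx !map_scalar_mx /= conjC1.
  by rewrite !(mulmx1, mul1mx, mulmx0, mul0mx, addr0, add0r).
suff [P Pu PAP] : exists2 P : 'M[C]_(1 + n, n.+1), P \is unitarymx &
    is_trig_mx (P *m A *m P^t*) /\ forall i, (P *m A *m P^t*) i i = (a :: s)`_i.
  by exists P.
exists (Q *m S); first by rewrite mul_unitarymx ?unitarymx_block_diag ?unitarymx1.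
have -> : Q *m S *m A *m (Q *m S)^t* = Q *m (S *m A *m S^t*) *m Q^t*.
  by rewrite trmx_mul map_mxM !mulmxA.
rewrite QSAS.
split; first by rewrite is_trig_block_mx // eqxx mx11_is_trig P't.
move=> i; case: (split_ordP i) => j ->.
  by rewrite block_mxEul ord1 mxE.
by rewrite block_mxEdr P'd.
Qed.

End Unitary.

Section Inequalities.
Variable C : numClosedFieldType.

Lemma sum_mul_conj_sqr_le (I : finType) (x y : I -> C) :
  `|\sum_i x i * (y i)^*| ^+ 2 <= (\sum_i `|x i| ^+ 2) * (\sum_i `|y i| ^+ 2).
Proof.
pose vec (z : I -> C) : 'rV[C]_#|I| := \row_j z (enum_val j).
have dotE z w : dotmx (vec z) (vec w) = \sum_i z i * (w i)^*.
  rewrite dotmxE mxE (big_enum_val (A := I)) /=.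
  by apply: eq_bigr => j _; rewrite !mxE.
have normE z : \sum_i `|z i| ^+ 2 = dotmx (vec z) (vec z).
  by rewrite dotE; apply: eq_bigr => i _; rewrite normCK.
by rewrite !normE -dotE; exact: (CauchySchwarz _ _ _).1.
Qed.

Lemma mulmx_trC_diag m n (X : 'M[C]_(m, n)) i :
  (X *m X^t*) i i = \sum_j `|X i j| ^+ 2.
Proof. by rewrite mxE; apply: eq_bigr => j _; rewrite !mxE normCK. Qed.

Lemma mulmx_trC_diag_ge0 m n (X : 'M[C]_(m, n)) i : 0 <= (X *m X^t*) i i.
Proof. by rewrite mulmx_trC_diag sumr_ge0 // => j _; rewrite exprn_ge0. Qed.

Lemma unitarymx_bessel m k n (B : 'M[C]_(m, n)) (U : 'M[C]_(k, n)) i :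
  U \is unitarymx -> (B *m U^t* *m (B *m U^t*)^t*) i i <= (B *m B^t*) i i.
Proof.
move=> /unitarymxP Uu; set c := B *m U^t*.
have ctE : c^t* = U *m B^t* by rewrite trmx_mul map_mxM trmxCK.
have DtE : (B - c *m U)^t* = B^t* - U^t* *m c^t*.
  by rewrite -[U^t* *m _]map_mxM -trmx_mul raddfB /= map_mxB.
have DD : (B - c *m U) *m (B - c *m U)^t* = B *m B^t* - c *m c^t*.
  rewrite DtE mulmxBl !mulmxBr !mulmxA -/c -[c *m U *m U^t*]mulmxA Uu mulmx1.
  by rewrite -[c *m U *m B^t*]mulmxA -ctE subrr subr0.
have := mulmx_trC_diag_ge0 (B - c *m U) i.
by rewrite DD !mxE subr_ge0.
Qed.

Lemma det_gram_le_AGM k n (Z : 'M[C]_(n, k)) : (0 < k)%N ->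
  \det (Z^t* *m Z) <= (\tr (Z^t* *m Z) / k%:R) ^+ k.
Proof.
move=> k_gt0; have [P Pu] := Schur (Z^t* *m Z) k_gt0.
rewrite /similar_to conjymx // => Gtrig.
set G := P *m (Z^t* *m Z) *m P^t* in Gtrig.
have PtP : P^t* *m P = 1%:M.
  by rewrite -{2}[P]trmxCK; apply/unitarymxP; rewrite trmxC_unitary.
have detG : \det (Z^t* *m Z) = \det G.
  by rewrite !det_mulmx mulrAC -det_mulmx (unitarymxP Pu) det1 mul1r.
have trG : \tr (Z^t* *m Z) = \tr G by rewrite [RHS]mxtrace_mulC !mulmxA PtP mul1mx.
have G_ge0 i : 0 <= G i i.
  have -> : G = (Z *m P^t*)^t* *m (Z *m P^t*)^t*^t*.
    by rewrite /G trmxCK trmx_mul map_mxM trmxCK !mulmxA.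
  exact: mulmx_trC_diag_ge0.
rewrite detG trG (det_trig Gtrig) /mxtrace.
have := (leif_AGM (A := predT) (fun i _ => G_ge0 i)).1.
by rewrite cardT size_enum_ord !big_mkcond.
Qed.

Lemma sum_sqr_det_colsub k n (U : 'M[C]_(k, n)) : U \is unitarymx ->
  \sum_(f : {ffun 'I_k -> 'I_n}) `|\det (colsub f U)| ^+ 2 = k`!%:R.
Proof.
move=> /unitarymxP Uu; have := cauchy_binet U (U^t*); rewrite Uu det1 mulr1 => ->.
apply: eq_bigr => f _; rewrite normCK; congr (_ * _).
have -> : rowsub f (U^t*) = (colsub f U)^t* by apply/matrixP => i j; rewrite !mxE.
by rewrite det_map_mx det_tr.
Qed.

Lemma sum_sqr_det_rowsub k n (W : 'M[C]_(n, k)) :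
  \sum_(f : {ffun 'I_k -> 'I_n}) `|\det (rowsub f W)| ^+ 2 =
    k`!%:R * \det (W^t* *m W).
Proof.
rewrite cauchy_binet; apply: eq_bigr => f _; rewrite normCKC; congr (_ * _).
have -> : colsub f (W^t*) = (rowsub f W)^t* by apply/matrixP => i j; rewrite !mxE.
by rewrite det_map_mx det_tr.
Qed.

End Inequalities.

Section BigmaxReal.
Variable R : numDomainType.

Lemma bigmax_real_ge0 (I : Type) (r : seq I) (P : pred I) (F : I -> R) x0 :
  0 <= x0 -> (forall i, P i -> 0 <= F i) ->
  0 <= \big[Order.max/x0]_(i <- r | P i) F i.
Proof.
move=> x0_ge0 F_ge0; elim/big_ind: _ => // x y x_ge0 y_ge0.
by rewrite comparable_le_max ?x_ge0 // real_comparable ?ger0_real.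
Qed.

Lemma le_bigmax_real (I : eqType) (r : seq I) (P : pred I) (F : I -> R) x0 j :
  x0 \is Num.real -> {in P, forall i, F i \is Num.real} -> j \in r -> P j ->
  F j <= \big[Order.max/x0]_(i <- r | P i) F i.
Proof.
move=> x0r Fr + Pj; elim: r => // a r IHr; rewrite inE big_cons.
have maxr_real : \big[Order.max/x0]_(i <- r | P i) F i \is Num.real.
  exact: bigmax_real.
case: ifP => [Pa | /negbT Pa] /predU1P[ja | /IHr le_j].
- by rewrite comparable_le_max ?ja ?lexx // real_comparable ?Fr.
- by rewrite comparable_le_max ?le_j ?orbT // real_comparable ?Fr.
- by rewrite -ja Pj in Pa.
- exact: le_j.
Qed.

End BigmaxReal.

Section MaxProd.
Variable C : numClosedFieldType.

Lemma eq_maxprod n k (f g : 'I_n -> C) : f =1 g -> maxprod k f = maxprod k g.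
Proof. by move=> fg; apply: eq_bigr => alpha _; apply: eq_bigr => i _. Qed.

Lemma maxprod_ge0 n k (f : 'I_n -> C) : (forall i, 0 <= f i) -> 0 <= maxprod k f.
Proof. by move=> f0; apply: bigmax_real_ge0 => // alpha _; apply: prodr_ge0. Qed.

Lemma prod_le_maxprod n k (f : 'I_n -> C) (alpha : {set 'I_n}) :
  (forall i, 0 <= f i) -> #|alpha| = k -> \prod_(i in alpha) f i <= maxprod k f.
Proof.
move=> f0 /eqP alpha_k; apply: le_bigmax_real; rewrite ?mem_index_enum //.
by move=> beta _; apply/ger0_real/prodr_ge0.
Qed.

Lemma norm_det_colsub_diag_le k n (U : 'M[C]_(k, n)) (r : 'I_n -> C)
    (f : 'I_k -> 'I_n) : (forall i, 0 <= r i) ->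
  `|\det (colsub f (U *m diag_mx (\row_i r i)))| <=
    `|\det (colsub f U)| * maxprod k r.
Proof.
move=> r0.
have -> : colsub f (U *m diag_mx (\row_i r i)) =
    colsub f U *m diag_mx (\row_j r (f j)).
  by apply/matrixP => i j; rewrite !mul_mx_diag !mxE.
rewrite det_mulmx det_diag normrM; under eq_bigr do rewrite mxE.
have [/injectiveP f_inj | /injectivePn [j1 [j2 j12 fj12]]] := boolP (injectiveb f).
  rewrite ler_wpM2l // ger0_norm ?prodr_ge0 //.
  rewrite -(big_imset _ (in2W f_inj)) /=.
  by apply: prod_le_maxprod; rewrite // card_imset // card_ord.
have -> : \det (colsub f U) = 0.
  by rewrite -det_tr (determinant_alternate j12) // => i; rewrite !mxE fj12.
by rewrite normr0 !mul0r.
Qed.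

Lemma det_mul_diag_sqr_le k n (U : 'M[C]_(k, n)) (r : 'I_n -> C)
    (W : 'M[C]_(n, k)) : U \is unitarymx -> (forall i, 0 <= r i) ->
  `|\det (U *m diag_mx (\row_i r i) *m W)| ^+ 2 <=
    maxprod k r ^+ 2 * \det (W^t* *m W).
Proof.
move=> Uu r0; set M := maxprod k r.
set S := \sum_(f : {ffun 'I_k -> 'I_n}) `|\det (colsub f U)| * `|\det (rowsub f W)|.
have M0 : 0 <= M by apply: maxprod_ge0.
have S0 : 0 <= S by rewrite sumr_ge0 // => f _; rewrite mulr_ge0.
have binet : k`!%:R * `|\det (U *m diag_mx (\row_i r i) *m W)| <= M * S.
  rewrite -[k`!%:R]ger0_norm ?ler0n // -normrM cauchy_binet mulr_sumr.
  apply: le_trans (ler_norm_sum _ _ _) _; apply: ler_sum => f _.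
  by rewrite normrM mulrA [M * _]mulrC ler_wpM2r ?norm_det_colsub_diag_le.
have schwarz : S ^+ 2 <= k`!%:R * (k`!%:R * \det (W^t* *m W)).
  have := sum_mul_conj_sqr_le (fun f : {ffun 'I_k -> 'I_n} => `|\det (colsub f U)|)
    (fun f => `|\det (rowsub f W)|).
  under eq_bigr do rewrite conj_normC.
  under [X in _ * X]eq_bigr do rewrite normr_id.
  under [X in _ <= X * _]eq_bigr do rewrite normr_id.
  by rewrite -/S ger0_norm ?S0 // sum_sqr_det_colsub ?sum_sqr_det_rowsub.
have kfact2_gt0 : 0 < k`!%:R ^+ 2 :> C by rewrite exprn_gt0 // ltr0n fact_gt0.
rewrite -(ler_pM2l kfact2_gt0) -exprMn.
apply: le_trans (_ : (M * S) ^+ 2 <= _).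
  by rewrite lerXn2r // nnegrE ?mulr_ge0 ?ler0n.
rewrite exprMn (mulrCA (k`!%:R ^+ 2)) ler_wpM2l ?exprn_ge0 //.
by rewrite expr2 -mulrA.
Qed.

End MaxProd.

Section RowNormBound.
Variable C : numClosedFieldType.

Lemma rownorm_ge0 n (A : 'M[C]_n) i : 0 <= rownorm A i.
Proof. by rewrite sqrtC_ge0 sumr_ge0 // => j _; rewrite exprn_ge0. Qed.

Lemma rownorm_sqr n (A : 'M[C]_n) i : rownorm A i ^+ 2 = (A *m A^t*) i i.
Proof. by rewrite sqrtCK mulmx_trC_diag. Qed.

Lemma rownorm_trmx n (A : 'M[C]_n) i : rownorm A^T i = colnorm A i.
Proof. by congr sqrtC; apply: eq_bigr => j _; rewrite mxE. Qed.

Lemma rownorm_factor n (A : 'M[C]_n) : exists2 B : 'M[C]_n,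
  A = diag_mx (\row_i rownorm A i) *m B & forall i, (B *m B^t*) i i <= 1.
Proof.
exists (\matrix_(i, j) (A i j / rownorm A i)).
  apply/matrixP => i j; rewrite mul_diag_mx !mxE.
  have [ri0 | ri0] := eqVneq (rownorm A i) 0; last by rewrite mulrC divfK.
  have /eqP : \sum_l `|A i l| ^+ 2 = 0.
    by rewrite -mulmx_trC_diag -rownorm_sqr ri0 expr0n.
  rewrite psumr_eq0 => [/allP/(_ j (mem_index_enum _))|l _]; last exact: exprn_ge0.
  by rewrite sqrf_eq0 normr_eq0 => /eqP ->; rewrite mul0r mulr0.
move=> i; rewrite mulmx_trC_diag.
under eq_bigr do rewrite mxE normf_div expr_div_n (ger0_norm (rownorm_ge0 A i)).
rewrite -mulr_suml -mulmx_trC_diag -rownorm_sqr.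
have [-> | ri0] := eqVneq (rownorm A i) 0; first by rewrite expr0n invr0 mulr0 ler01.
by rewrite divff // expf_neq0.
Qed.

Lemma det_intertwined_sqr_le k n (A : 'M[C]_n) (U : 'M[C]_(k, n)) (T : 'M[C]_k) :
  (0 < k)%N -> U \is unitarymx -> U *m A = T *m U ->
  `|\det T| ^+ 2 <= (n%:R / k%:R) ^+ k * maxprod k (rownorm A) ^+ 2.
Proof.
move=> k_gt0 Uu UA; have [B AE B_le1] := rownorm_factor A.
set W := B *m U^t*.
have TE : T = U *m diag_mx (\row_i rownorm A i) *m W.
  by rewrite /W mulmxA -(mulmxA U) -AE UA -mulmxA (unitarymxP Uu) mulmx1.
have trW : \tr (W^t* *m W) <= n%:R.
  rewrite mxtrace_mulC -[n in n%:R]card_ord -sumr_const.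
  by apply: ler_sum => i _; apply: le_trans (unitarymx_bessel B i Uu) (B_le1 i).
have trW_ge0 : 0 <= \tr (W^t* *m W).
  by rewrite mxtrace_mulC sumr_ge0 // => i _; apply: mulmx_trC_diag_ge0.
have detW : \det (W^t* *m W) <= (n%:R / k%:R) ^+ k.
  apply: le_trans (det_gram_le_AGM W k_gt0) _.
  rewrite lerXn2r ?nnegrE ?divr_ge0 ?ler0n //.
  by rewrite ler_pM2r // invr_gt0 ltr0n.
rewrite TE mulrC; apply: le_trans (det_mul_diag_sqr_le W Uu (rownorm_ge0 A)) _.
by rewrite ler_wpM2l ?exprn_ge0 ?maxprod_ge0 //; apply: rownorm_ge0.
Qed.

Lemma norm_prod_eigen_le_rownorm n k (A : 'M[C]_n) (s : seq C) :
  (0 < k)%N -> (k <= n)%N -> eigenseq A s ->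
  `|\prod_(i < k) s`_i| <= sqrtC ((n%:R / k%:R) ^+ k) * maxprod k (rownorm A).
Proof.
move=> k_gt0 kn eigAs; have [P Pu [Gtrig Gdiag]] := unitary_trig_eigenseq eigAs.
set G := P *m A *m P^t* in Gtrig Gdiag; set w := widen_ord kn.
have PA : P *m A = G *m P by rewrite /G mulmxKtV.
have w_inj : injective w by move=> i j /(congr1 val) /= /val_inj.
have detT : \det (mxsub w w G) = \prod_(i < k) s`_i.
  rewrite det_trig; first by apply: eq_bigr => i _; rewrite mxE Gdiag.
  by apply/is_trig_mxP => i j ij; rewrite mxE (is_trig_mxP Gtrig).
have := det_intertwined_sqr_le k_gt0 (rowsub_unitarymx w_inj Pu)
  (rowsub_trig_intertwine kn Gtrig PA).
have M0 := maxprod_ge0 k (rownorm_ge0 A).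
have q0 : 0 <= (n%:R / k%:R) ^+ k :> C by rewrite exprn_ge0 ?divr_ge0 ?ler0n.
rewrite detT => le_sqr.
rewrite -(sqrCK (normr_ge0 _)) -(sqrCK M0) -sqrtCM ?nnegrE ?q0 ?exprn_ge0 //.
by rewrite ler_sqrtC // nnegrE ?mulr_ge0 ?q0 ?exprn_ge0.
Qed.

End RowNormBound.

Theorem theorem3p5 (C : numClosedFieldType) (n k : nat) (A : 'M[C]_n) (s : seq C) :
  (1 <= k)%N -> (k <= n)%N ->
  eigenseq A s -> modulus_sorted s ->
  `|\prod_(i < k) s`_i| <=
    sqrtC ((n%:R / k%:R) ^+ k) *
      Order.min (maxprod k (colnorm A)) (maxprod k (rownorm A)).
Proof.
(* The bound holds for any k eigenvalues. *)
move=> k_gt0 kn eigAs _.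
have row_bound := norm_prod_eigen_le_rownorm k_gt0 kn eigAs.
have eigATs : eigenseq A^T s by rewrite /eigenseq char_poly_trmx.
have := norm_prod_eigen_le_rownorm k_gt0 kn eigATs.
rewrite (eq_maxprod _ (rownorm_trmx A)) => col_bound.
by rewrite /Order.min; case: ifP.
Qed.
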